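(* Suppose that, for a given $\lambda >0$, $f(\lambda)$ is $\rho$-accurate, i.e. $|f(\lambda)|\le \rho$, and define \[ C(\{ S_k^\lambda \} _{k = 0}^{N - 1} ) - \gamma = :a \in (-\rho,\rho). \] Then, for the corresponding tuple $\{\lambda, S_k^\lambda,P_k^\lambda,F_k^\lambda\} _{k = 0}^{N - 1}$, $\{S_k^\lambda,F_k^\lambda\} _{k = 0}^{N - 1}$ is an optimal solution of the covariance selection problem with $\gamma$ replaced with $\gamma+ a \in (\gamma- \rho,\gamma + \rho)$.
   Context: Consider the stochastic LTI system $x(k+1)=Ax(k)+Bu(k)+w(k)$ with $x(k)\in\mathbb R^n$, $u(k)\in\mathbb R^m$, $x(0)\sim\mathcal N(z,V)$, $w(k)\sim\mathcal N(0,W)$ mutually independent, and linear feedback $u(k)=F_kx(k)$, $k\in\{0,\dots,N-1\}$. With $S_k=\mathbb E([x(k);u(k)][x(k);u(k)]^T)$, the covariance selection problem is: minimize $J_p(\{S_k\})=\mathrm{Tr}\big(Q_f([A\ B]S_{N-1}[A\ B]^T+W)\big)+\sum_{k=0}^{N-1}\mathrm{Tr}(\mathrm{diag}(Q_k,R_k)S_k)$ over $\{S_k,F_k\}$ subject to $S_k=\Phi(F_k,S_{k-1})$ ($k=1,\dots,N-1$), $S_0=[I_n;F_0](V+zz^T)[I_n;F_0]^T$, and $C(\{S_k\})\le\gamma$, where $C(\{S_k\})=\mathrm{Tr}\big(\tilde Q_f([A\ B]S_{N-1}[A\ B]^T+W)\big)+\sum_{k=0}^{N-1}\mathrm{Tr}(\mathrm{diag}(\tilde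 Q_k,\tilde R_k)S_k)$ and $\Phi(F,S)=[I_n;F]([A\ B]S[A\ B]^T+W)[I_n;F]^T$. Assumptions: $Q_f,\tilde Q_f,Q_k,\tilde Q_k\succeq0$, $R_k+\lambda\tilde R_k\succ0$ for all $k$, $\lambda>0$; $V\succ0$, $W\succ0$; strict feasibility of the inequality constraint. For $\lambda\ge0$, $X_N^\lambda=Q_f+\lambda\tilde Q_f$, $X_k^\lambda=A^TX_{k+1}^\lambda A-A^TX_{k+1}^\lambda B(R_k+\lambda\tilde R_k+B^TX_{k+1}^\lambda B)^{-1}B^TX_{k+1}^\lambda A+Q_k+\lambda\tilde Q_k$, $F_k^\lambda=-(R_k+\lambda\tilde R_k+B^TX_{k+1}^\lambda B)^{-1}B^TX_{k+1}^\lambda A$, $S_0^\lambda=[I;F_0^\lambda](V+zz^T)[I;F_0^\lambda]^T$, $S_k^\lambda=\Phi(F_k^\lambda,S_{k-1}^\lambda)$, $P_k^\lambda=\begin{bmatrix}Q_k+\lambda\tilde Q_k+A^TX_{k+1}^\lambda A & A^TX_{k+1}^\lambda B\\ B^TX_{k+1}^\lambda A & R_k+\lambda\tilde R_k+B^TX_{k+1}^\lambda B\end{bmatrix}$, and $f(\lambda)=C(\{S_k^\lambda\}_{k=0}^{N-1})-\gamma$. It was shown that for any $\lambda>0$ with $C(\{S_k^\lambda\})$ equal to the constraint level, $\{(S_k^\lambda,F_k^\lambda)\}$ is optimal for the problem with that constraint level. The setting is that $\lambda$ is obtained approximately by a bisection search on $f$, so $f(\lambda)=0$ holds only up to finite precision.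 *)

From HB Require Import structures.
From mathcomp Require Import all_boot all_order all_algebra.
Set Implicit Arguments. Unset Strict Implicit. Unset Printing Implicit Defensive.
Import Order.TTheory GRing.Theory Num.Theory.
Local Open Scope ring_scope.

Section CovSel.
Variables (R : realFieldType) (n m : nat).
Variables (A : 'M[R]_n) (B : 'M[R]_(n, m)) (W : 'M[R]_n).

Definition psd p (M : 'M[R]_p) : Prop :=
  M^T = M /\ forall x : 'cV[R]_p, 0 <= (x^T *m M *m x) 0 0.
Definition pd p (M : 'M[R]_p) : Prop :=
  M^T = M /\ forall x : 'cV[R]_p, x != 0 -> 0 < (x^T *m M *m x) 0 0.

Definition AB : 'M[R]_(n, n + m) := row_mx A B.
Definition IF (F : 'M[R]_(m, n)) : 'M[R]_(n + m, n) := col_mx 1%:M F.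

Definition Phi (F : 'M[R]_(m, n)) (S : 'M[R]_(n + m)) : 'M[R]_(n + m) :=
  IF F *m (AB *m S *m AB^T + W) *m (IF F)^T.

Definition quad_cost (N : nat) (Qf : 'M[R]_n) (Q : nat -> 'M[R]_n)
    (Rc : nat -> 'M[R]_m) (S : nat -> 'M[R]_(n + m)) : R :=
  \tr (Qf *m (AB *m S N.-1 *m AB^T + W)) +
  \sum_(k < N) \tr (block_mx (Q k) 0 0 (Rc k) *m S k).

(* initial second moment [I;F0](V + z z^T)[I;F0]^T *)
Definition S_init (V : 'M[R]_n) (z : 'cV[R]_n) (F0 : 'M[R]_(m, n)) :
    'M[R]_(n + m) :=
  IF F0 *m (V + z *m z^T) *m (IF F0)^T.

Definition dyn_constraints (N : nat) (V : 'M[R]_n) (z : 'cV[R]_n)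
    (S : nat -> 'M[R]_(n + m)) (F : nat -> 'M[R]_(m, n)) : Prop :=
  S 0%N = S_init V z (F 0%N) /\
  forall k : nat, (1 <= k < N)%N -> S k = Phi (F k) (S k.-1).

Definition feasible (N : nat) (V : 'M[R]_n) (z : 'cV[R]_n)
    (Qft : 'M[R]_n) (Qt : nat -> 'M[R]_n) (Rt : nat -> 'M[R]_m) (gam : R)
    (S : nat -> 'M[R]_(n + m)) (F : nat -> 'M[R]_(m, n)) : Prop :=
  dyn_constraints N V z S F /\ quad_cost N Qft Qt Rt S <= gam.

Definition optimal (N : nat) (V : 'M[R]_n) (z : 'cV[R]_n)
    (Qf : 'M[R]_n) (Q : nat -> 'M[R]_n) (Rc : nat -> 'M[R]_m)
    (Qft : 'M[R]_n) (Qt : nat -> 'M[R]_n) (Rt : nat -> 'M[R]_m) (gam : R)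
    (S : nat -> 'M[R]_(n + m)) (F : nat -> 'M[R]_(m, n)) : Prop :=
  feasible N V z Qft Qt Rt gam S F /\
  forall S' F', feasible N V z Qft Qt Rt gam S' F' ->
    quad_cost N Qf Q Rc S <= quad_cost N Qf Q Rc S'.

Variables (N : nat) (Qf Qft : 'M[R]_n) (Q Qt : nat -> 'M[R]_n)
          (Rc Rt : nat -> 'M[R]_m) (lam : R).

Definition Qlam (k : nat) : 'M[R]_n := Q k + lam *: Qt k.
Definition Rlam (k : nat) : 'M[R]_m := Rc k + lam *: Rt k.

(* Riccati recursion, indexed backwards: Xrev j = X_{N-j}^lam *)
Fixpoint Xrev (j : nat) : 'M[R]_n :=
  match j with
  | 0 => Qf + lam *: Qft
  | j'.+1 =>
      let k := (N - j'.+1)%N in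
      let X := Xrev j' in
      A^T *m X *m A
      - A^T *m X *m B *m invmx (Rlam k + B^T *m X *m B) *m B^T *m X *m A
      + Qlam k
  end.

(* X_k^lam, meaningful for k <= N *)
Definition Xlam (k : nat) : 'M[R]_n := Xrev (N - k).

Definition Flam (k : nat) : 'M[R]_(m, n) :=
  - (invmx (Rlam k + B^T *m Xlam k.+1 *m B) *m B^T *m Xlam k.+1 *m A).

(* P_k^lam (part of the tuple; not needed for the optimality statement) *)
Definition Plam (k : nat) : 'M[R]_(n + m) :=
  block_mx (Qlam k + A^T *m Xlam k.+1 *m A) (A^T *m Xlam k.+1 *m B)
           (B^T *m Xlam k.+1 *m A) (Rlam k + B^T *m Xlam k.+1 *m B).

Fixpoint Slam (V : 'M[R]_n) (z : 'cV[R]_n) (k : nat) : 'M[R]_(n + m) :=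
  match k with
  | 0 => S_init V z (Flam 0)
  | k'.+1 => Phi (Flam k'.+1) (Slam V z k')
  end.

End CovSel.

From HB Require Import structures.
From mathcomp Require Import all_boot all_order all_algebra.
From mathcomp Require Import ring lra zify.
Set Implicit Arguments. Unset Strict Implicit. Unset Printing Implicit Defensive.
Import Order.TTheory GRing.Theory Num.Theory.
Local Open Scope ring_scope.

(* Completing the square in the block matrix P_k^lam at every stage and
   telescoping shows that for every policy {F_k} obeying the dynamics
     J + lam C = Tr(X_0 (V + z z^T)) + sum_k Tr(X_(k+1) W)
                 + sum_k Tr((F_k - F_k^lam)^T G_k (F_k - F_k^lam) Sigma_k),
   where G_k = Puu k = R_k + lam Rt_k + B^T X_(k+1) B is positive definite and
   Sigma_k = E x(k) x(k)^T is positive semidefinite.  The last sum is a sum of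
   traces of products of semidefinite matrices, hence nonnegative, and it
   vanishes for F = F^lam: the Riccati feedback minimises the Lagrangian
   J + lam C.  With lam >= 0 such a minimiser is optimal for the constraint
   C <= C(S^lam), and C(S^lam) = gamma + a. *)

Section PositiveSemidefinite.
Variable R : realFieldType.

Definition bilin p (M : 'M[R]_p) (u v : 'cV_p) : R := (u^T *m M *m v) 0 0.

Lemma bilinC p (M : 'M[R]_p) u v : M^T = M -> bilin M u v = bilin M v u.
Proof.
move=> sM; rewrite /bilin.
have -> : (v^T *m M *m u) 0 0 = (v^T *m M *m u)^T 0 0 by rewrite [RHS]mxE.
by rewrite !trmx_mul !trmxK sM mulmxA.
Qed.

Lemma bilinDZ p (M : 'M[R]_p) u v t :
  bilin M (u + t *: v) (u + t *: v) =
  bilin M u u + t * (bilin M u v + bilin M v u) + t ^+ 2 * bilin M v v.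
Proof.
rewrite /bilin [(u + _)^T]linearD /= [(t *: v)^T]linearZ /= !mulmxDl !mulmxDr -!scalemxAl -!scalemxAr.
by rewrite !mxE; ring.
Qed.

Lemma bilin_delta p (M : 'M[R]_p) i j :
  bilin M (delta_mx i 0) (delta_mx j 0) = M i j.
Proof. by rewrite /bilin trmx_delta -rowE -colE !mxE. Qed.

Lemma psd_cauchy_schwarz p (M : 'M[R]_p) u v : psd M ->
  bilin M u v ^+ 2 <= bilin M u u * bilin M v v.
Proof.
case=> sM hM.
have quad_ge0 t : 0 <= bilin M u u + t * (2 * bilin M u v) + t ^+ 2 * bilin M v v.
  by have := hM (u + t *: v); rewrite -/(bilin _ _ _) bilinDZ (bilinC v u sM) -mulr2n mulr_natl.
have a_ge0 : 0 <= bilin M u u := hM u.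
have c_ge0 : 0 <= bilin M v v := hM v.
move: quad_ge0 a_ge0 c_ge0.
set a := bilin M u u; set b := bilin M u v; set c := bilin M v v => quad_ge0 a_ge0 c_ge0.
(* Evaluate the quadratic at its minimiser, or, if it is affine, far enough out
   to contradict b != 0. *)
have [c0|c_neq0] := eqVneq c 0.
  have [->|b_neq0] := eqVneq b 0; first by rewrite expr0n mulr_ge0.
  have := quad_ge0 (- (a + 1) / (2 * b)); rewrite c0 mulr0 addr0.
  have -> : - (a + 1) / (2 * b) * (2 * b) = - (a + 1) by field.
  lra.
have c_gt0 : 0 < c by rewrite lt_def c_neq0.
have := mulr_ge0 c_ge0 (quad_ge0 (- b / c)).
have -> : c * (a + - b / c * (2 * b) + (- b / c) ^+ 2 * c) = a * c - b ^+ 2 by field.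
lra.
Qed.

Lemma psd_row_eq0 p (M : 'M[R]_p) i j : psd M -> M i i = 0 -> M i j = 0.
Proof.
move=> hM Mii0; have := psd_cauchy_schwarz (delta_mx i 0) (delta_mx j 0) hM.
rewrite !bilin_delta Mii0 mul0r => sq_le0.
by apply/eqP; rewrite -sqrf_eq0 eq_le sq_le0 sqr_ge0.
Qed.

Lemma psd_pivot p (M : 'M[R]_p) i : psd M -> 0 < M i i ->
  psd (M - (M i i)^-1 *: (col i M *m row i M)).
Proof.
move=> hM Mii_gt0; have sM := hM.1.
have row_tr : (row i M)^T = col i M by rewrite tr_row sM.
split.
  by rewrite linearB linearZ /= trmx_mul row_tr -row_tr trmxK sM.
move=> x.
have -> : x^T *m (M - (M i i)^-1 *: (col i M *m row i M)) *m x =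
    x^T *m M *m x - (M i i)^-1 *: ((x^T *m col i M) *m (row i M *m x)).
  by rewrite mulmxBr mulmxBl -scalemxAr -scalemxAl !mulmxA.
have -> : x^T *m col i M = (bilin M x (delta_mx i 0))%:M.
  by rewrite /bilin colE mulmxA -mx11_scalar.
have -> : row i M *m x = (bilin M x (delta_mx i 0))%:M.
  by rewrite (bilinC _ _ sM) /bilin rowE trmx_delta -mx11_scalar.
rewrite -scalar_mxM mxE -/(bilin _ _ _) !mxE eqxx mulr1n -expr2 subr_ge0.
rewrite ler_pdivrMl // (bilinC _ _ sM).
by have := psd_cauchy_schwarz (delta_mx i 0) x hM; rewrite bilin_delta [M i i * _]mulrC.
Qed.

Lemma psd_mxtrace_mul_outer_ge0 p (P : 'M[R]_p) (c : 'cV_p) : psd P ->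
  0 <= \tr (P *m (c *m c^T)).
Proof. by move=> hP; rewrite mulmxA mxtrace_mulC mulmxA trace_mx11; apply: hP.2. Qed.

(* Peel Q into rank-one terms c c^T row by row (an LDL^T factorisation); each
   contributes Tr(P c c^T) = c^T P c >= 0. *)
Lemma psd_mxtrace_mul_ge0 p (P Q : 'M[R]_p) : psd P -> psd Q -> 0 <= \tr (P *m Q).
Proof.
move=> hP; suff rows_from k : forall Q : 'M_p, psd Q ->
    (forall i j : 'I_p, (k <= i)%N -> Q i j = 0) -> 0 <= \tr (P *m Q).
  by move=> hQ; apply: (rows_from p) => // i j; rewrite leqNgt ltn_ord.
elim: k => [|k IH] {}Q hQ Q_rows.
  suff -> : Q = 0 by rewrite mulmx0 mxtrace0.
  by apply/matrixP=> i j; rewrite mxE Q_rows.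
have [le_pk|lt_kp] := leqP p k.
  by apply: IH => // i j le_ki; have := ltn_ord i; lia.
pose piv := Ordinal lt_kp.
have Q_piv_rows (i : 'I_p) : (k <= i)%N -> i = piv \/ forall j, Q i j = 0.
  by rewrite leq_eqVlt => /orP[/eqP ki|/Q_rows]; [left; apply/val_inj|right].
have [Q_piv0|Q_piv_neq0] := eqVneq (Q piv piv) 0.
  by apply: IH => // i j /Q_piv_rows[->|//]; apply: psd_row_eq0.
have Q_piv_gt0 : 0 < Q piv piv.
  by rewrite lt_def Q_piv_neq0 -(bilin_delta Q piv piv); apply: hQ.2.
have row_tr : (row piv Q)^T = col piv Q by rewrite tr_row hQ.1.
set Q' := Q - (Q piv piv)^-1 *: (col piv Q *m row piv Q).
have -> : Q = Q' + (Q piv piv)^-1 *: (col piv Q *m row piv Q) by rewrite subrK.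
rewrite mulmxDr mxtraceD -scalemxAr mxtraceZ.
apply: addr_ge0; last first.
  apply: mulr_ge0; first by rewrite invr_ge0 ltW.
  rewrite -[row piv Q]trmxK row_tr; exact: psd_mxtrace_mul_outer_ge0.
apply: IH => [|i j /Q_piv_rows[->|Qi0]]; first exact: psd_pivot.
  by rewrite !mxE big_ord1 !mxE mulrA mulVf // mul1r subrr.
by rewrite !mxE big_ord1 !mxE !Qi0 mul0r mulr0 subrr.
Qed.

Lemma pd_psd p (P : 'M[R]_p) : pd P -> psd P.
Proof.
case=> sP P_gt0; split=> // x; have [->|x_neq0] := eqVneq x 0.
  by rewrite mulmx0 mxE.
exact/ltW/P_gt0.
Qed.

Lemma psdD p (P1 P2 : 'M[R]_p) : psd P1 -> psd P2 -> psd (P1 + P2).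
Proof.
case=> s1 h1 [s2 h2]; split; first by rewrite linearD /= s1 s2.
by move=> x; rewrite mulmxDr mulmxDl mxE addr_ge0.
Qed.

Lemma pdD p (P1 P2 : 'M[R]_p) : pd P1 -> psd P2 -> pd (P1 + P2).
Proof.
case=> s1 h1 [s2 h2]; split; first by rewrite linearD /= s1 s2.
move=> x x_neq0; rewrite mulmxDr mulmxDl mxE.
by have := h1 x x_neq0; have := h2 x; lra.
Qed.

Lemma psdZ p (P : 'M[R]_p) a : 0 <= a -> psd P -> psd (a *: P).
Proof.
move=> a_ge0 [sP hP]; split; first by rewrite linearZ /= sP.
by move=> x; rewrite -scalemxAr -scalemxAl mxE mulr_ge0.
Qed.

Lemma psd_congr p q (P : 'M[R]_p) (M : 'M[R]_(p, q)) : psd P -> psd (M^T *m P *m M).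
Proof.
case=> sP hP; split; first by rewrite !trmx_mul trmxK sP mulmxA.
by move=> x; have := hP (M *m x); rewrite trmx_mul !mulmxA.
Qed.

Lemma psd_congrT p q (P : 'M[R]_p) (M : 'M[R]_(q, p)) : psd P -> psd (M *m P *m M^T).
Proof. by move/(psd_congr M^T); rewrite trmxK. Qed.

Lemma psd_outer p (z : 'cV[R]_p) : psd (z *m z^T).
Proof.
have psd1 : psd (1%:M : 'M[R]_1).
  by split=> [|x]; rewrite ?trmx1 // mulmx1 mxE big_ord1 !mxE -expr2 sqr_ge0.
by have := psd_congrT z psd1; rewrite mulmx1.
Qed.

Lemma psd_block_diag p q (P1 : 'M[R]_p) (P2 : 'M[R]_q) :
  psd P1 -> psd P2 -> psd (block_mx P1 0 0 P2).
Proof.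
move=> h1 h2; have -> : block_mx P1 0 0 P2 =
    (row_mx 1%:M 0)^T *m P1 *m row_mx 1%:M 0 + (row_mx 0 1%:M)^T *m P2 *m row_mx 0 1%:M.
  rewrite !tr_row_mx !trmx1 !trmx0 !mul_col_mx !mul1mx !mul0mx !mul_mx_row.
  by rewrite !mulmx0 !mulmx1 add_col_mx addr0 add0r block_mxEv.
by apply: psdD; apply: psd_congr.
Qed.

Lemma pd_unitmx p (P : 'M[R]_p) : pd P -> P \in unitmx.
Proof.
case=> _ P_gt0; rewrite -row_free_unit -kermx_eq0; apply: contraT.
case/rowV0Pn=> v /sub_kermxP vP0 v_neq0.
by have := P_gt0 v^T; rewrite trmx_eq0 v_neq0 trmxK vP0 mul0mx mxE ltxx; apply.
Qed.

End PositiveSemidefinite.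

Lemma mx_complete_square (R : fieldType) p q (H : 'M[R]_p) (K : 'M[R]_(q, p))
    (G : 'M[R]_q) (F : 'M[R]_(q, p)) : G^T = G -> G \in unitmx ->
  (col_mx 1%:M F)^T *m block_mx H K^T K G *m col_mx 1%:M F =
  H - K^T *m invmx G *m K + (F + invmx G *m K)^T *m G *m (F + invmx G *m K).
Proof.
move=> sG G_unit.
rewrite tr_col_mx trmx1 mul_row_block mul_row_col !mul1mx !mulmx1.
rewrite [(F + _)^T]linearD /= trmx_mul trmx_inv sG !mulmxDl !mulmxDr !mulmxA mulmxKV // mulmxK //.
set t := K^T *m invmx G *m K.
rewrite -!addrA !(addrCA (- t)) addNr addr0; congr (_ + _).
by rewrite (addrC (F^T *m G *m F)) addrA.
Qed.

Lemma mxtrace_mul_congr (R : comRingType) p q (M : 'M[R]_p) (L : 'M[R]_(p, q))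
    (S : 'M[R]_q) :
  \tr (M *m (L *m S *m L^T)) = \tr (L^T *m M *m L *m S).
Proof. by rewrite !mulmxA mxtrace_mulC !mulmxA. Qed.

Lemma quad_cost_weighted (R : realFieldType) n m (A : 'M[R]_n) (B : 'M[R]_(n, m))
    W N Qf Qft Q Qt Rc Rt lam S :
  quad_cost A B W N (Qf + lam *: Qft) (Qlam Q Qt lam) (Rlam Rc Rt lam) S =
  quad_cost A B W N Qf Q Rc S + lam * quad_cost A B W N Qft Qt Rt S.
Proof.
have split_weight k : block_mx (Qlam Q Qt lam k) 0 0 (Rlam Rc Rt lam k) =
    block_mx (Q k) 0 0 (Rc k) + lam *: block_mx (Qt k) 0 0 (Rt k).
  by rewrite scale_block_mx add_block_mx !scaler0 !addr0.
rewrite /quad_cost mulmxDl -scalemxAl mxtraceD mxtraceZ.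
under eq_bigr do rewrite split_weight mulmxDl -scalemxAl mxtraceD mxtraceZ.
by rewrite big_split /= -mulr_sumr; lra.
Qed.

Section Riccati.
Variables (R : realFieldType) (n m : nat) (A : 'M[R]_n) (B : 'M[R]_(n, m)).
Variables (W : 'M[R]_n) (N : nat) (Qf Qft : 'M[R]_n) (Q Qt : nat -> 'M[R]_n).
Variables (Rc Rt : nat -> 'M[R]_m) (lam : R).

Local Notation X := (Xlam A B N Qf Qft Q Qt Rc Rt lam).
Local Notation Fl := (Flam A B N Qf Qft Q Qt Rc Rt lam).
Local Notation P := (Plam A B N Qf Qft Q Qt Rc Rt lam).
Local Notation Ql := (Qlam Q Qt lam).
Local Notation Rl := (Rlam Rc Rt lam).
Local Notation AB := (AB A B).

Definition Puu k : 'M[R]_m := Rl k + B^T *m X k.+1 *m B.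
Definition Pux k : 'M[R]_(m, n) := B^T *m X k.+1 *m A.

Lemma Plam_stage k : block_mx (Ql k) 0 0 (Rl k) + AB^T *m X k.+1 *m AB = P k.
Proof.
by rewrite /AB tr_row_mx mul_col_mx mul_col_row add_block_mx !add0r.
Qed.

Lemma FlamE k : Fl k = - (invmx (Puu k) *m Pux k).
Proof. by rewrite /Flam /Puu /Pux !mulmxA. Qed.

Lemma Xlam_ge k : (N <= k)%N -> X k = Qf + lam *: Qft.
Proof. by rewrite /Xlam -subn_eq0 => /eqP->. Qed.

Lemma Xlam_rec k : (k < N)%N -> X k =
  A^T *m X k.+1 *m A - A^T *m X k.+1 *m B *m invmx (Puu k) *m B^T *m X k.+1 *m A
  + Ql k.
Proof.
move=> lt_kN; rewrite /Xlam (_ : (N - k = (N - k.+1).+1)%N) /=; last by lia.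
by rewrite (_ : (N - (N - k.+1).+1 = k)%N) //; lia.
Qed.

Lemma Plam_complete_square k F : (k < N)%N -> (X k.+1)^T = X k.+1 -> pd (Puu k) ->
  (IF F)^T *m P k *m IF F = X k + (F - Fl k)^T *m Puu k *m (F - Fl k).
Proof.
move=> lt_kN sX hPuu.
have -> : P k = block_mx (Ql k + A^T *m X k.+1 *m A) (Pux k)^T (Pux k) (Puu k).
  by rewrite /Pux !trmx_mul trmxK sX mulmxA.
rewrite mx_complete_square ?hPuu.1 ?pd_unitmx // FlamE opprK (Xlam_rec lt_kN).
rewrite /Pux !trmx_mul trmxK sX !mulmxA; congr (_ + _).
by rewrite [Ql k + _]addrC addrAC.
Qed.

Hypotheses (hQl : forall k, psd (Ql k)) (hRl : forall k, pd (Rl k)).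
Hypothesis hXN : psd (Qf + lam *: Qft).

Lemma Xlam_psd k : psd (X k).
Proof.
suff Xlam_psd_from j : forall k, (N - k <= j)%N -> psd (X k) by exact: Xlam_psd_from.
elim: j => [|j IH] {}k le_j; first by rewrite Xlam_ge //; lia.
have [le_Nk|lt_kN] := leqP N k; first by rewrite Xlam_ge.
have hX : psd (X k.+1) by apply: IH; lia.
have := Plam_complete_square (Fl k) lt_kN hX.1 (pdD (hRl k) (psd_congr B hX)).
rewrite subrr trmx0 !mul0mx addr0 => <-; apply: psd_congr; rewrite -Plam_stage.
exact: psdD (psd_block_diag (hQl k) (pd_psd (hRl k))) (psd_congr _ hX).
Qed.

Lemma Puu_pd k : pd (Puu k).
Proof. exact: pdD (hRl k) (psd_congr B (Xlam_psd k.+1)). Qed.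

Lemma stage_cost_to_go k F (S : 'M[R]_n) : (k < N)%N ->
  \tr (block_mx (Ql k) 0 0 (Rl k) *m (IF F *m S *m (IF F)^T)) +
  \tr (X k.+1 *m (AB *m (IF F *m S *m (IF F)^T) *m AB^T + W)) =
  \tr (X k *m S) + \tr (X k.+1 *m W) + \tr ((F - Fl k)^T *m Puu k *m (F - Fl k) *m S).
Proof.
move=> lt_kN; set S' := IF F *m S *m (IF F)^T.
rewrite mulmxDr mxtraceD (mxtrace_mul_congr (X k.+1) AB S') addrA -[in LHS]mxtraceD.
rewrite -mulmxDl Plam_stage mxtrace_mul_congr.
rewrite Plam_complete_square ?(Xlam_psd _).1 //; last exact: Puu_pd.
by rewrite mulmxDl mxtraceD addrAC.
Qed.

Definition state_moment (V : 'M[R]_n) (z : 'cV[R]_n) (S : nat -> 'M[R]_(n + m)) k :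
  'M[R]_n :=
  if k is k'.+1 then AB *m S k' *m AB^T + W else V + z *m z^T.

Lemma dyn_constraintsE V z S F : dyn_constraints A B W N V z S F ->
  forall k, (k < N)%N -> S k = IF (F k) *m state_moment V z S k *m (IF (F k))^T.
Proof. by case=> S0 Sk [|k] lt_kN //; rewrite Sk. Qed.

Lemma state_moment_psd V z S F : psd V -> psd W -> dyn_constraints A B W N V z S F ->
  forall k, (k < N)%N -> psd (state_moment V z S k).
Proof.
move=> hV hW hdyn; elim=> [|k IH] lt_kN /=; first exact: psdD hV (psd_outer z).
apply/psdD/hW/psd_congrT; rewrite (dyn_constraintsE hdyn (ltnW lt_kN)).
exact/psd_congrT/IH/ltnW.
Qed.

Lemma cost_to_go_telescope V z S F j : dyn_constraints A B W N V z S F -> (j <= N)%N ->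
  \sum_(k < j) \tr (block_mx (Ql k) 0 0 (Rl k) *m S k) + \tr (X j *m state_moment V z S j) =
  \tr (X 0 *m (V + z *m z^T)) + \sum_(k < j) \tr (X k.+1 *m W) +
  \sum_(k < j) \tr ((F k - Fl k)^T *m Puu k *m (F k - Fl k) *m state_moment V z S k).
Proof.
move=> hdyn; elim: j => [|j IH] le_jN; first by rewrite !big_ord0 add0r !addr0.
have := stage_cost_to_go (F j) (state_moment V z S j) le_jN.
rewrite -(dyn_constraintsE hdyn le_jN) /= => stage.
by rewrite !big_ord_recr /= -addrA stage !addrA IH 1?ltnW //; lra.
Qed.

Lemma weighted_cost_decomposition V z S F : (0 < N)%N ->
  dyn_constraints A B W N V z S F ->
  quad_cost A B W N (Qf + lam *: Qft) Ql Rl S =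
  \tr (X 0 *m (V + z *m z^T)) + \sum_(k < N) \tr (X k.+1 *m W) +
  \sum_(k < N) \tr ((F k - Fl k)^T *m Puu k *m (F k - Fl k) *m state_moment V z S k).
Proof.
move=> N_gt0 hdyn; rewrite -(cost_to_go_telescope hdyn (leqnn N)) /quad_cost addrC.
rewrite Xlam_ge //; congr (_ + \tr (_ *m _)).
by rewrite -[in RHS](prednK N_gt0).
Qed.

Lemma Slam_dyn V z : dyn_constraints A B W N V z
  (Slam A B W N Qf Qft Q Qt Rc Rt lam V z) Fl.
Proof. by split=> // [[|k]]. Qed.

Lemma Flam_minimizes_weighted_cost V z S F : (0 < N)%N -> psd V -> psd W ->
  dyn_constraints A B W N V z S F ->
  quad_cost A B W N (Qf + lam *: Qft) Ql Rl (Slam A B W N Qf Qft Q Qt Rc Rt lam V z)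
  <= quad_cost A B W N (Qf + lam *: Qft) Ql Rl S.
Proof.
move=> N_gt0 hV hW hdyn.
rewrite (weighted_cost_decomposition N_gt0 hdyn).
rewrite (weighted_cost_decomposition N_gt0 (Slam_dyn V z)).
rewrite [X in _ + X <= _]big1 => [|k _]; last by rewrite subrr trmx0 !mul0mx mxtrace0.
rewrite addr0 lerDl; apply: sumr_ge0 => k _; apply: psd_mxtrace_mul_ge0.
  exact/psd_congr/pd_psd/Puu_pd.
exact: state_moment_psd hV hW hdyn _ (ltn_ord k).
Qed.

Lemma Slam_optimal V z : 0 <= lam -> (0 < N)%N -> psd V -> psd W ->
  let S := Slam A B W N Qf Qft Q Qt Rc Rt lam V z in
  optimal A B W N V z Qf Q Rc Qft Qt Rt (quad_cost A B W N Qft Qt Rt S) S Fl.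
Proof.
move=> lam_ge0 N_gt0 hV hW S; split; first by split; [apply: Slam_dyn|].
move=> S' F' [hdyn le_cost].
have := Flam_minimizes_weighted_cost N_gt0 hV hW hdyn; rewrite !quad_cost_weighted.
have := ler_wpM2l lam_ge0 le_cost; lra.
Qed.

End Riccati.

Unset Implicit Arguments.

Theorem proposition6 (R : realFieldType) (n m N : nat)
    (A : 'M[R]_n) (B : 'M[R]_(n, m)) (W V : 'M[R]_n) (z : 'cV[R]_n)
    (Qf Qft : 'M[R]_n) (Q Qt : nat -> 'M[R]_n) (Rc Rt : nat -> 'M[R]_m)
    (gam rho lam : R) :
  (0 < N)%N ->
  psd Qf -> psd Qft -> (forall k, psd (Q k)) -> (forall k, psd (Qt k)) ->
  (forall l : R, 0 < l -> forall k, pd (Rc k + l *: Rt k)) ->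
  pd V -> pd W ->
  (* strict feasibility of the inequality constraint *)
  (exists (S : nat -> 'M[R]_(n + m)) (F : nat -> 'M[R]_(m, n)),
      dyn_constraints A B W N V z S F /\ quad_cost A B W N Qft Qt Rt S < gam) ->
  0 < lam ->
  (* f(lam) is rho-accurate *)
  `| quad_cost A B W N Qft Qt Rt (Slam A B W N Qf Qft Q Qt Rc Rt lam V z) - gam |
     <= rho ->
  let a := quad_cost A B W N Qft Qt Rt (Slam A B W N Qf Qft Q Qt Rc Rt lam V z)
           - gam in
  (gam - rho <= gam + a <= gam + rho) /\
  optimal A B W N V z Qf Q Rc Qft Qt Rt (gam + a)
    (Slam A B W N Qf Qft Q Qt Rc Rt lam V z)
    (Flam A B N Qf Qft Q Qt Rc Rt lam).
Proof.
(* Strict feasibility only serves to find lam by bisection; it is not used here. *)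
move=> N_gt0 hQf hQft hQ hQt hRl hV hW _ lam_gt0 f_acc a.
have lam_ge0 := ltW lam_gt0.
split; first by move: f_acc; rewrite ler_norml -/a => /andP[]; lra.
rewrite /a addrC subrK; apply: Slam_optimal => //; try exact: pd_psd.
- by move=> k; apply: psdD (hQ k) (psdZ lam_ge0 (hQt k)).
- exact: hRl.
- exact: psdD hQf (psdZ lam_ge0 hQft).
Qed.
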